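(* Let $p\geq 1$ and let $\mathcal{A}$ be an $n$-dimensional naturally graded $p$-filiform associative algebra over $\mathbb{C}$, identified with its natural grading $\mathcal{A}=\bigoplus_{i\geq 1}\mathcal{A}_i$. Suppose $\{e_1,\dots,e_{n-p},f_1,\dots,f_p\}$ is a basis of $\mathcal{A}$ such that $e_1\in\mathcal{A}_1$, $e_1e_i=e_{i+1}$ for $1\leq i\leq n-p-1$, $e_1e_{n-p}=0$, $e_1f_j=0$ for $1\leq j\leq p$, $e_i\in\mathcal{A}_i$ for $1\leq i\leq n-p$, and each $f_i$ is homogeneous with $f_i\in\mathcal{A}_{r_i}$, where $r_1\leq r_2\leq\dots\leq r_p\leq n-p$. Then $r_s\leq s$ for every $s\in\{1,2,\dots,p\}$.
   Context: All algebras are finite-dimensional associative algebras over $\mathbb{C}$. For an algebra $\mathcal{A}$ put $\mathcal{A}^1=\mathcal{A}$ and $\mathcal{A}^{i+1}=\sum_{k=1}^{i}\mathcal{A}^k\mathcal{A}^{i+1-k}$; $\mathcal{A}$ is nilpotent if $\mathcal{A}^i=0$ for some $i$. For nilpotent $\mathcal{A}$ with nilindex $k$ (i.e. $\mathcal{A}^k\neq 0=\mathcal{A}^{k+1}$), set $\mathcal{A}_i=\mathcal{A}^i/\mathcal{A}^{i+1}$ and $\operatorname{gr}\mathcal{A}=\mathcal{A}_1\oplus\dots\oplus\mathcal{A}_k$, a graded algebra with $\mathcal{A}_i\mathcal{A}_j\subseteq\mathcal{A}_{i+j}$; $\mathcal{A}$ is naturally graded if $\mathcal{A}\cong\operatorname{gr}\mathcal{A}$,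 in which case $\mathcal{A}$ is identified with $\bigoplus_i\mathcal{A}_i$ (so $\mathcal{A}_i\mathcal{A}_j\subseteq\mathcal{A}_{i+j}$ and $\mathcal{A}^m=\bigoplus_{i\geq m}\mathcal{A}_i$). For $x\in\mathcal{A}$, $L_x:\mathcal{A}\to\mathcal{A}$, $z\mapsto xz$. For $x\in\mathcal{A}\setminus\mathcal{A}^2$, $C(x)$ is the decreasing sequence of sizes of the Jordan blocks of $L_x$; sequences are ordered lexicographically, and the characteristic sequence is $C(\mathcal{A})=\max_{x\in\mathcal{A}\setminus\mathcal{A}^2}C(x)$. $\mathcal{A}$ is $p$-filiform if $C(\mathcal{A})=(n-p,1,\dots,1)$ (with $p$ entries equal to $1$), where $n=\dim\mathcal{A}$. *)

(* The field C of complex numbers is rendered as R[i]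
   (mathcomp-real-closed's [complex R]) for an arbitrary [R : realType]
   (every realType is a complete archimedean ordered field, i.e. a copy of
   the reals, so R[i] is a copy of C). *)
From HB Require Import structures.
From mathcomp Require Import all_boot all_order all_algebra all_field.
From mathcomp Require Import complex.
From mathcomp Require Import reals.

Set Implicit Arguments.
Unset Strict Implicit.
Unset Printing Implicit Defensive.

Import Order.TTheory GRing.Theory Num.Theory.
Local Open Scope ring_scope.

Section AssocAlgebra.
Variables (F : fieldType) (V : vectType F).
(* A finite-dimensional (not necessarily unital) algebra structure on the
   vector space V is a multiplication  mul : V -> V -> V . *)
Variable mul : V -> V -> V.

Definition is_assoc_algebra : Prop :=
  [/\ forall x, linear (mul x),
      forall y, linear (mul^~ y)
    & forall x y z, mul x (mul y z) = mul (mul x y) z].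

(* product of two subspaces: U W = span { u w | u in U, w in W }
   (by bilinearity, it is spanned by products of basis vectors) *)
Definition prodv (U W : {vspace V}) : {vspace V} :=
  (<< [seq mul u w | u <- vbasis U, w <- vbasis W] >>)%VS.

(* pows m = [:: A^1; A^2; ...; A^m ]   with
   A^1 = A,  A^(i+1) = \sum_{k=1}^{i} A^k A^(i+1-k) *)
Fixpoint pows (m : nat) : seq {vspace V} :=
  match m with
  | 0 => [::]
  | m'.+1 =>
      let s := pows m' in
      rcons s (if m' is 0 then fullv
               else (\sum_(k < m') prodv (nth 0%VS s k) (nth 0%VS s (m' - 1 - k)))%VS)
  end.

Definition apow (m : nat) : {vspace V} := last fullv (pows m).

Definition nilpotent_alg : Prop := exists i, apow i = 0%VS.

Definition Lmul (x : V) : V -> V := mul x.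

Definition natural_grading (G : nat -> {vspace V}) : Prop :=
  [/\ forall i, (i == 0)%N || (\dim (fullv : {vspace V}) < i)%N -> G i = 0%VS,
      directv (\sum_(1 <= i < (\dim (fullv : {vspace V})).+1) G i)%VS,
      forall i j, (prodv (G i) (G j) <= G (i + j)%N)%VS
    & forall m, (1 <= m)%N ->
        apow m = (\sum_(m <= i < (\dim (fullv : {vspace V})).+1) G i)%VS].

End AssocAlgebra.

Section Jordan.
Variables (F : fieldType) (V : vectType F).

(* s is the (decreasing) sequence of sizes of the Jordan blocks of f:
   there are eigenvalues lam b and a basis of V made of chains
   v b 0, ..., v b (s_b - 1) (block b) with
   f (v b t) = lam b * v b t + v b (t+1)   (v b s_b := 0). *)
Definition jordan_type (f : V -> V) (s : seq nat) : Prop :=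
  [/\ sorted geq s, all (fun k => 0 < k)%N s &
      exists (lam : nat -> F) (v : nat -> nat -> V),
        basis_of fullv
          (flatten [seq [seq v b t | t <- iota 0 (nth 0%N s b)]
                      | b <- iota 0 (size s)])
        /\ forall b t, (b < size s)%N -> (t < nth 0%N s b)%N ->
             f (v b t) = lam b *: v b t
                         + (if (t.+1 < nth 0%N s b)%N then v b t.+1 else 0)].
End Jordan.

Fixpoint lex_le (s t : seq nat) : bool :=
  match s, t with
  | [::], _ => true
  | _ :: _, [::] => false
  | a :: s', b :: t' => (a < b)%N || ((a == b) && lex_le s' t')
  end.

Section Filiform.
Variables (F : fieldType) (V : vectType F) (mul : V -> V -> V).

Definition char_seq (c : seq nat) : Prop :=
  (exists2 x, x \notin apow mul 2 & jordan_type (Lmul mul x) c) /\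
  (forall x s, x \notin apow mul 2 -> jordan_type (Lmul mul x) s -> lex_le s c).

Definition p_filiform (p : nat) : Prop :=
  char_seq ((\dim (fullv : {vspace V}) - p)%N :: nseq p 1%N).
End Filiform.

From Pilot Require Import Defs.
From HB Require Import structures.
From mathcomp Require Import all_boot all_order all_algebra all_field.
From mathcomp Require Import complex reals zify.
Import Defs. (* Defs.prodv is otherwise shadowed by falgebra's prodv. *)
Import GRing.Theory.

Set Implicit Arguments.
Unset Strict Implicit.
Unset Printing Implicit Defensive.

Local Open Scope ring_scope.

(* Let E be the span of the e_i.  As L_{e_1} maps the algebra A into E and
   e_{i+1} = e_1 e_i, associativity makes E a right ideal.  Because the basis is
   homogeneous, A^m is spanned by the basis vectors of degree >= m.  Hence if no
   f_j has degree k >= 1, then A^k <= E + A^{k+1}, and multiplying on the right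
   (A^{k+1} = A^k A) gives A^{k+1} <= E + A^{k+2}; by linear independence no f_j
   can then have degree k + 1.  So whenever some f_j has degree d >= 2, some
   f_j' has degree d - 1, and for r_1 <= ... <= r_p this forces r_s <= s. *)

Section LinearPreimage.
Variables (F : fieldType) (V : vectType F) (g : V -> V).
Hypothesis linear_g : linear g.

(* [linear g] is only a Prop; packing g as a linear map turns "g maps U into Z"
   into the subspace inclusion [U <= linpreimv Z], closed under spans and sums. *)
Definition linpreimv (Z : {vspace V}) : {vspace V} :=
  (linfun (HB.pack g (GRing.isLinear.Build _ _ _ _ g linear_g) : {linear V -> V})
     @^-1: Z)%VS.

Lemma memv_linpreimv Z v : (v \in linpreimv Z) = (g v \in Z).
Proof. by rewrite -memv_preim lfunE. Qed.

End LinearPreimage.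

Section FreeFamilies.
Variables (F : fieldType) (V : vectType F).

Lemma free_mem_span_filter (I : eqType) (b : I -> V) (ks : seq I) (P : pred I) k :
  free [seq b i | i <- ks] -> k \in ks -> b k \in <<[seq b i | i <- ks & P i]>>%VS -> P k.
Proof.
move=> free_b ks_k; apply: contraTT => nPk.
have: free ([seq b i | i <- ks & P i] ++ [seq b i | i <- ks & predC P i]).
  by rewrite -map_cat (perm_free (perm_map b (permEl (perm_filterC P ks)))).
rewrite cat_free => /and3P[_ _ /directv_addP capPnP].
have bk_nP : b k \in <<[seq b i | i <- ks & predC P i]>>%VS.
  by apply/memv_span/map_f; rewrite mem_filter /= nPk.
apply: contraNN (free_not0 free_b (map_f b ks_k)) => bk_P.
by rewrite -memv0 -capPnP memv_cap bk_P.
Qed.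

End FreeFamilies.

Section Powers.
Variables (F : fieldType) (V : vectType F) (mul : V -> V -> V).

Lemma size_pows m : size (pows mul m) = m.
Proof. by elim: m => //= m IHm; rewrite size_rcons IHm. Qed.

Lemma nth_pows m k : (k < m)%N -> nth 0%VS (pows mul m) k = apow mul k.+1.
Proof.
elim: m => // m IHm; rewrite ltnS leq_eqVlt => /predU1P[-> | ltkm].
  by rewrite /apow /= nth_rcons size_pows ltnn eqxx last_rcons.
by rewrite /= nth_rcons size_pows ltkm IHm.
Qed.

Lemma powsSS m : pows mul m.+2 = rcons (pows mul m.+1)
  (\sum_(k < m.+1) prodv mul (nth 0 (pows mul m.+1) k)
                           (nth 0 (pows mul m.+1) (m.+1 - 1 - k)))%VS.
Proof. by []. Qed.

Lemma apowS m : (0 < m)%N ->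
  apow mul m.+1 = (\sum_(k < m) prodv mul (apow mul k.+1) (apow mul (m - k)))%VS.
Proof.
case: m => // m _; rewrite {1}/apow powsSS last_rcons.
apply: eq_bigr => k _; have ltkm := ltn_ord k.
by rewrite !nth_pows //; [congr (prodv _ _ (apow _ _)) | ]; lia.
Qed.

Lemma prodv_subv (U W Z : {vspace V}) :
  (forall u w, u \in U -> w \in W -> mul u w \in Z) -> (prodv mul U W <= Z)%VS.
Proof.
move=> mulUWZ; apply/span_subvP => _ /allpairsP[[u w] [Uu Ww ->]].
by apply: mulUWZ; apply: vbasis_mem.
Qed.

End Powers.

Section AssociativePowers.
Variables (F : fieldType) (V : vectType F) (mul : V -> V -> V).
Hypothesis assoc_mul : is_assoc_algebra mul.

Let linear_mull x : linear (mul x). Proof. by case: assoc_mul. Qed.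
Let linear_mulr y : linear (mul^~ y). Proof. by case: assoc_mul. Qed.
Let mulA x y z : mul x (mul y z) = mul (mul x y) z. Proof. by case: assoc_mul. Qed.

Lemma memv_prodv (U W : {vspace V}) u w :
  u \in U -> w \in W -> mul u w \in prodv mul U W.
Proof.
have mulUw x : x \in vbasis U -> w \in W -> mul x w \in prodv mul U W.
  move=> Ux; rewrite -(memv_linpreimv (linear_mull x)); apply/subvP.
  rewrite -{1}(span_basis (vbasisP W)); apply/span_subvP => y Wy.
  by rewrite memv_linpreimv; apply/memv_span/allpairs_f.
move=> Uu Ww; rewrite -(memv_linpreimv (linear_mulr w)); move: u Uu; apply/subvP.
rewrite -{1}(span_basis (vbasisP U)); apply/span_subvP => x Ux.
by rewrite memv_linpreimv mulUw.
Qed.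

Lemma mul_apow a b u w : (0 < a)%N -> (0 < b)%N ->
  u \in apow mul a -> w \in apow mul b -> mul u w \in apow mul (a + b).
Proof.
case: a => // a; case: b => // b _ _ Au Aw.
have lt_a_ab : (a < a + b.+1)%N by rewrite addnS ltnS leq_addr.
rewrite addSn apowS ?addn_gt0 ?orbT //.
apply: (subvP (sumv_sup (Ordinal lt_a_ab) _ (subvv _))) => //=.
by rewrite addKn memv_prodv.
Qed.

Lemma mul_apow_sub_prodv a b u w : (0 < a)%N ->
  u \in apow mul a -> w \in apow mul b.+1 -> mul u w \in prodv mul (apow mul (a + b)) fullv.
Proof.
elim/ltn_ind: b a u w => -[_ | b IHb] a u w a_gt0 Au Aw.
  by rewrite addn0 memv_prodv ?memvf.
rewrite -(memv_linpreimv (linear_mull u)); move: w Aw; apply/subvP.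
rewrite apowS //; apply/subv_sumP => k _; apply: prodv_subv => x y Ax Ay.
have ltkb := ltn_ord k; rewrite memv_linpreimv mulA.
rewrite (_ : a + b.+1 = a + k.+1 + (b - k))%N; last by lia.
by apply: IHb; rewrite -?subSn ?addn_gt0 ?a_gt0 ?mul_apow //; lia.
Qed.

Lemma apowSr k : (0 < k)%N -> apow mul k.+1 = prodv mul (apow mul k) fullv.
Proof.
move=> k_gt0; apply/eqP; rewrite eqEsubv; apply/andP; split.
  rewrite apowS //; apply/subv_sumP => c _; apply: prodv_subv => x y Ax Ay.
  have ltck := ltn_ord c.
  rewrite (_ : k = c.+1 + (k - c).-1)%N; last by lia.
  by apply: mul_apow_sub_prodv; rewrite ?prednK ?subn_gt0.
apply: prodv_subv => x y Ax _; rewrite -addn1.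
by apply: mul_apow; rewrite ?memvf.
Qed.

Lemma apowS_sub_addv_ideal (I : {vspace V}) k : (0 < k)%N ->
    (forall u w, u \in I -> mul u w \in I) ->
  (apow mul k <= I + apow mul k.+1)%VS -> (apow mul k.+1 <= I + apow mul k.+2)%VS.
Proof.
move=> k_gt0 idealI sAkI; rewrite apowSr //; apply: prodv_subv => u w Au _.
rewrite -(memv_linpreimv (linear_mulr w)); move: u Au; apply/subvP.
apply: (subv_trans sAkI); rewrite subv_add; apply/andP; split; apply/subvP => x Ax.
  by rewrite memv_linpreimv; apply: (subvP (addvSl _ _)); apply: idealI.
rewrite memv_linpreimv; apply: (subvP (addvSr _ _)); rewrite -addn1.
by apply: mul_apow; rewrite ?memvf.
Qed.

End AssociativePowers.

Section NaturalGrading.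
Variables (F : fieldType) (V : vectType F) (mul : V -> V -> V) (G : nat -> {vspace V}).
Hypothesis gradG : natural_grading mul G.
Local Notation N := (\dim (fullv : {vspace V})).

Lemma grade0 : G 0 = 0%VS.
Proof. by case: gradG => ->. Qed.

Lemma grade_sub_sumv a c d : (a <= d < c)%N -> (G d <= \sum_(a <= i < c) G i)%VS.
Proof. by move=> ad_c; rewrite (big_rem d) ?mem_index_iota ?addvSl. Qed.

Lemma grade_sub_apow m d : (0 < m <= d)%N -> (G d <= apow mul m)%VS.
Proof.
case/andP => m_gt0 le_md; case: gradG => Gout _ _ apowE.
have [le_dN | lt_Nd] := leqP d N; last by rewrite Gout ?lt_Nd ?orbT ?sub0v.
by rewrite apowE // grade_sub_sumv ?le_md.
Qed.

Lemma lower_grades_capv_apow m : (0 < m)%N ->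
  ((\sum_(1 <= i < m) G i) :&: apow mul m)%VS = 0%VS.
Proof.
case: gradG => _ dirG _ apowE m_gt0; rewrite apowE //.
have [le_mN | lt_Nm] := leqP m N.+1;
  last by rewrite [X in (_ :&: X)%VS]big_geq ?capv0 ?(ltnW lt_Nm).
move/directvP: dirG; rewrite /= !(big_cat_nat m_gt0 le_mN) /= => dimAB.
apply/eqP; rewrite -dimv_eq0 -leqn0.
have := dimv_sum_cap (\sum_(1 <= i < m) G i) (\sum_(m <= i < N.+1) G i).
have := dimv_leq_sum (index_iota 1 m) xpredT G.
have := dimv_leq_sum (index_iota m N.+1) xpredT G.
lia.
Qed.

Section HomogeneousBasis.
Variables (I : eqType) (b : I -> V) (deg : I -> nat) (ks : seq I).
Hypothesis basis_b : basis_of fullv [seq b k | k <- ks].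
Hypothesis homog_b : forall k, k \in ks -> b k \in G (deg k).

Lemma deg_gt0 k : k \in ks -> (0 < deg k)%N.
Proof.
move=> ks_k; rewrite lt0n; apply: contra (free_not0 (basis_free basis_b) (map_f b ks_k)).
by move=> /eqP deg0; move: (homog_b ks_k); rewrite deg0 grade0 memv0.
Qed.

Lemma apow_homogeneous_basis m : (0 < m)%N ->
  apow mul m = <<[seq b k | k <- ks & (m <= deg k)%N]>>%VS.
Proof.
move=> m_gt0; set high := [seq b k | k <- ks & _].
set low := [seq b k | k <- ks & predC (fun k => m <= deg k)%N k].
have sub_high : (<<high>> <= apow mul m)%VS.
  apply/span_subvP => x /mapP[k]; rewrite mem_filter => /andP[le_m_deg ks_k] ->.
  by apply: (subvP (grade_sub_apow _)) (homog_b ks_k); rewrite m_gt0.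
have sub_low : (<<low>> <= \sum_(1 <= i < m) G i)%VS.
  apply/span_subvP => x /mapP[k]; rewrite mem_filter /= -ltnNge => /andP[lt_deg_m ks_k] ->.
  by apply: (subvP (grade_sub_sumv _)) (homog_b ks_k); rewrite deg_gt0.
apply/eqP; rewrite eqEsubv sub_high andbT; apply/subvP => v Av.
have: v \in (<<high>> + <<low>>)%VS.
  rewrite -span_cat -map_cat (eq_span (perm_mem (perm_map b (permEl (perm_filterC _ ks))))).
  by rewrite (span_basis basis_b) memvf.
case/memv_addP => s high_s [t low_t def_v].
have Amt : t \in apow mul m.
  by rewrite (_ : t = v - s) ?memvB ?(subvP sub_high s) // def_v addrC addKr.
suff t0 : t = 0 by rewrite def_v t0 addr0.
by apply/eqP; rewrite -memv0 -(lower_grades_capv_apow m_gt0) memv_cap Amt (subvP sub_low).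
Qed.

End HomogeneousBasis.

End NaturalGrading.

Lemma le_of_no_grade_gap (r : nat -> nat) (p : nat) :
    (forall j, (1 <= j < p)%N -> (r j <= r j.+1)%N) ->
    (forall j, (1 <= j <= p)%N -> (2 <= r j)%N ->
       exists2 j', (1 <= j' <= p)%N & r j' = (r j).-1) ->
  forall s, (1 <= s <= p)%N -> (r s <= s)%N.
Proof.
move=> r_step no_gap.
have r_mono : {in [pred j | 1 <= j <= p]%N &, {homo r : i j / (i <= j)%N}}.
  apply: homo_leq_in => // [|i j|i]; first exact: leq_trans.
    by rewrite !inE => ? ? k ?; rewrite inE; lia.
  by rewrite !inE => ? ?; apply: r_step; lia.
elim=> [|s IHs] s_range; first lia.
rewrite leqNgt; apply/negP => lt_s_r.
have [j j_range r_j] := no_gap _ s_range (leq_ltn_trans (ltn0Sn s) lt_s_r).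
have [le_js | lt_sj] := leqP j s.
  by have := r_mono j s; have := IHs; rewrite !inE; lia.
by have := r_mono s.+1 j; rewrite !inE; lia.
Qed.

Section FiliformBasis.
Variables (F : fieldType) (V : vectType F) (mul : V -> V -> V) (G : nat -> {vspace V}).
Variables (n p : nat) (e f : nat -> V) (r : nat -> nat).
Hypothesis assoc_mul : is_assoc_algebra mul.
Hypothesis gradG : natural_grading mul G.
Hypothesis basis_ef :
  basis_of fullv ([seq e i | i <- iota 1 (n - p)] ++ [seq f j | j <- iota 1 p]).
Hypothesis mul_e1e : forall i, (1 <= i <= n - p - 1)%N -> mul (e 1%N) (e i) = e i.+1.
Hypothesis mul_e1_last : mul (e 1%N) (e (n - p)%N) = 0.
Hypothesis mul_e1f : forall j, (1 <= j <= p)%N -> mul (e 1%N) (f j) = 0.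
Hypothesis e_homog : forall i, (1 <= i <= n - p)%N -> e i \in G i.
Hypothesis f_homog : forall j, (1 <= j <= p)%N -> f j \in G (r j).

Let linear_mull x : linear (mul x). Proof. by case: assoc_mul. Qed.
Let linear_mulr y : linear (mul^~ y). Proof. by case: assoc_mul. Qed.
Let mulA x y z : mul x (mul y z) = mul (mul x y) z. Proof. by case: assoc_mul. Qed.

Local Notation espan := <<[seq e i | i <- iota 1 (n - p)]>>%VS.

Definition ef_vec (k : nat + nat) : V := match k with inl i => e i | inr j => f j end.
Definition ef_deg (k : nat + nat) : nat := match k with inl i => i | inr j => r j end.
Definition ef_index : seq (nat + nat) :=
  [seq inl i | i <- iota 1 (n - p)] ++ [seq inr j | j <- iota 1 p].

Lemma inl_ef_index i : (inl i \in ef_index) = (i \in iota 1 (n - p)).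
Proof.
rewrite mem_cat; apply/orP/idP => [[/mapP[i' ? [->]] | /mapP[]] // | ?].
by left; apply: map_f.
Qed.

Lemma inr_ef_index j : (inr j \in ef_index) = (j \in iota 1 p).
Proof.
rewrite mem_cat; apply/orP/idP => [[/mapP[] | /mapP[j' ? [->]]] // | ?].
by right; apply: map_f.
Qed.

Lemma ef_basis : basis_of fullv [seq ef_vec k | k <- ef_index].
Proof. by rewrite map_cat -!map_comp. Qed.

Lemma ef_homog k : k \in ef_index -> ef_vec k \in G (ef_deg k).
Proof.
case: k => [i | j]; rewrite ?inl_ef_index ?inr_ef_index mem_iota => range_k.
  by apply: e_homog; lia.
by apply: f_homog; lia.
Qed.

Lemma mul_e1_espan y : mul (e 1%N) y \in espan.
Proof.
rewrite -(memv_linpreimv (linear_mull _)); apply: (subvP _ _ (memvf y)).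
rewrite -(span_basis basis_ef); apply/span_subvP => x; rewrite mem_cat memv_linpreimv.
case/orP => /mapP[i i_range ->]; rewrite mem_iota in i_range;
  last by rewrite mul_e1f ?mem0v //; lia.
have [lt_i_np | ge_i_np] := ltnP i (n - p).
  by rewrite mul_e1e; [apply/memv_span/map_f; rewrite mem_iota |]; lia.
by rewrite (_ : i = n - p)%N ?mul_e1_last ?mem0v //; lia.
Qed.

Lemma mul_espan u w : u \in espan -> mul u w \in espan.
Proof.
rewrite -(memv_linpreimv (linear_mulr w)); move: u; apply/subvP/span_subvP.
move=> x /mapP[[|[|i]] i_range ->]; rewrite mem_iota in i_range; first lia.
  by rewrite memv_linpreimv mul_e1_espan.
by rewrite memv_linpreimv -mul_e1e -?mulA ?mul_e1_espan //; lia.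
Qed.

Lemma apow_sub_espan_addv k : (0 < k)%N -> {in iota 1 p, forall j, r j != k} ->
  (apow mul k <= espan + apow mul k.+1)%VS.
Proof.
move=> k_gt0 no_f_of_grade_k.
rewrite (apow_homogeneous_basis gradG ef_basis ef_homog) //.
apply/span_subvP => x /mapP[[i | j] + ->]; rewrite mem_filter /=.
  by case/andP=> _; rewrite inl_ef_index => ?; apply/(subvP (addvSl _ _))/memv_span/map_f.
case/andP=> le_k_rj; rewrite inr_ef_index => j_range; apply: (subvP (addvSr _ _)).
apply: (subvP (grade_sub_apow gradG _)) (f_homog _);
  last by move: j_range; rewrite mem_iota.
by rewrite /= ltn_neqAle le_k_rj andbT eq_sym no_f_of_grade_k.
Qed.

Lemma f_notin_espan_addv_apow j :
  (1 <= j <= p)%N -> f j \notin (espan + apow mul (r j).+1)%VS.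
Proof.
move=> j_range; pose P (k : nat + nat) := if k is inr j' then (r j < r j')%N else true.
suff sub_P : (espan + apow mul (r j).+1 <= <<[seq ef_vec k | k <- ef_index & P k]>>)%VS.
  apply/negP => /(subvP sub_P) fj_P; suff: P (inr j) by rewrite /P ltnn.
  apply: (free_mem_span_filter (P := P) (k := inr j) (basis_free ef_basis) _ fj_P).
  by rewrite inr_ef_index mem_iota.
rewrite subv_add (apow_homogeneous_basis gradG ef_basis ef_homog) //.
apply/andP; split; apply: sub_span => x /mapP[k k_in ->].
  rewrite -inl_ef_index in k_in; rewrite -[e k]/(ef_vec (inl k)).
  by apply: map_f; rewrite mem_filter k_in.
apply: map_f; move: k_in; rewrite !mem_filter => /andP[lt_deg ->].
by rewrite andbT; case: k lt_deg.
Qed.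

Lemma f_grade_gap j : (1 <= j <= p)%N -> (2 <= r j)%N ->
  exists2 j', (1 <= j' <= p)%N & r j' = (r j).-1.
Proof.
move=> j_range r_j_ge2.
have [/hasP[j' j'_range /eqP r_j'] | /hasPn no_f_of_grade] :=
  boolP (has (fun j' => r j' == (r j).-1) (iota 1 p)).
  by exists j' => //; move: j'_range; rewrite mem_iota; lia.
have grade_gt0 : (0 < (r j).-1)%N by rewrite -ltnS prednK // ltnW.
have := apowS_sub_addv_ideal assoc_mul grade_gt0 mul_espan
  (apow_sub_espan_addv grade_gt0 no_f_of_grade).
rewrite prednK ?(ltnW r_j_ge2) // => sub_rj.
have fj_apow : f j \in apow mul (r j).
  by apply/(subvP (grade_sub_apow gradG _))/f_homog; lia.
by have := f_notin_espan_addv_apow j_range; rewrite (subvP sub_rj).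
Qed.

End FiliformBasis.

Theorem mainTheorem1 (R : realType) (V : vectType R[i]) (mul : V -> V -> V)
    (G : nat -> {vspace V}) (n p : nat)
    (e f : nat -> V) (r : nat -> nat) :
  is_assoc_algebra mul ->
  \dim (fullv : {vspace V}) = n ->
  (1 <= p)%N ->
  nilpotent_alg mul ->
  natural_grading mul G ->
  p_filiform mul p ->
  basis_of fullv ([seq e i | i <- iota 1 (n - p)] ++ [seq f j | j <- iota 1 p]) ->
  e 1%N \in G 1%N ->
  (forall i, (1 <= i <= n - p - 1)%N -> mul (e 1%N) (e i) = e i.+1) ->
  mul (e 1%N) (e (n - p)%N) = 0 ->
  (forall j, (1 <= j <= p)%N -> mul (e 1%N) (f j) = 0) ->
  (forall i, (1 <= i <= n - p)%N -> e i \in G i) ->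
  (forall j, (1 <= j <= p)%N -> f j \in G (r j)) ->
  (forall j, (1 <= j < p)%N -> (r j <= r j.+1)%N) ->
  (r p <= n - p)%N ->
  forall s, (1 <= s <= p)%N -> (r s <= s)%N.
Proof.
move=> assoc_mul _ _ _ gradG _ basis_ef _ mul_e1e mul_e1_last mul_e1f e_homog f_homog.
move=> r_step _.
apply: le_of_no_grade_gap r_step _ => j j_range.
exact: (f_grade_gap assoc_mul gradG basis_ef mul_e1e mul_e1_last mul_e1f e_homog f_homog).
Qed.
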